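(* For a probability distribution $\mu$ defined over a metric space $(\mathcal{X}, c)$ with a unit diameter and $\delta>0$, let $\tilde\mu$ be a probability distribution that differs from $\mu$ by a $\delta$ fraction of mass (i.e., $\|\mu-\tilde\mu\|_{TV}=\delta$) such that the $(1-\frac{\delta}{10})$-partial $p$-Wasserstein distance between $\mu$ and $\tilde\mu$ is at least $\frac{1}{2}W_p(\mu, \tilde\mu)$. Then, for any parameters $p\ge 1$ and $k>0$, \[ \mathrm{RPW}_{p,k}(\mu, \tilde{\mu}) = \Theta\left(\min\left\{\delta, \frac{1}{k}W_p(\mu, \tilde\mu) \right\}\right). \]
   Context: For $p\ge1$, $k\ge0$ and probability distributions $\mu,\nu$ on a metric space of unit diameter, $\mathrm{RPW}_{p,k}(\mu,\nu)=\inf\{\varepsilon\ge0 \mid W_{p,1-\varepsilon}(\mu,\nu)\le k\varepsilon\}$, where $W_{p,\alpha}$ denotes the $\alpha$-partial $p$-Wasserstein distance (minimum cost of a plan transporting $\alpha$ mass) and $W_p$ is the $p$-Wasserstein distance. *)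

From HB Require Import structures.
From mathcomp Require Import all_boot all_order all_algebra.
From mathcomp Require Import all_classical all_reals all_analysis.
Set Implicit Arguments. Unset Strict Implicit. Unset Printing Implicit Defensive.
Import Order.TTheory GRing.Theory Num.Theory.
Local Open Scope classical_set_scope.
Local Open Scope ring_scope.

Section Defs.
Context (d : measure_display) (T : measurableType d) (R : realType).

Definition unit_diam_metric (c : T -> T -> R) : Prop :=
  [/\ forall x y, 0 <= c x y, forall x y, c x y = 0 <-> x = y,
      forall x y, c x y = c y x,
      forall x y z, c x z <= c x y + c y z &
      forall x y, c x y <= 1].

Definition tv_dist (mu nu : probability T R) : R :=
  sup [set `|fine (mu A) - fine (nu A)| | A in measurable].

Definition plan_cost (c : T -> T -> R) (p : R)
    (pi : {measure set (T * T)%type -> \bar R}) : \bar R :=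
  (\int[pi]_z ((c z.1 z.2) `^ p)%:E)%E.

Definition is_coupling (mu nu : probability T R)
    (pi : {measure set (T * T)%type -> \bar R}) : Prop :=
  (forall A, measurable A -> pi (A `*` setT) = mu A) /\
  (forall B, measurable B -> pi (setT `*` B) = nu B).

Definition is_partial_plan (mu nu : probability T R) (alpha : R)
    (pi : {measure set (T * T)%type -> \bar R}) : Prop :=
  [/\ forall A, measurable A -> (pi (A `*` setT) <= mu A)%E,
      forall B, measurable B -> (pi (setT `*` B) <= nu B)%E &
      pi setT = alpha%:E].

Definition Wp (c : T -> T -> R) (p : R) (mu nu : probability T R) : R :=
  (fine (ereal_inf [set plan_cost c p pi | pi in is_coupling mu nu])) `^ p^-1.

Definition Wpa (c : T -> T -> R) (p alpha : R) (mu nu : probability T R) : R :=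
  (fine (ereal_inf [set plan_cost c p pi | pi in is_partial_plan mu nu alpha]))
    `^ p^-1.

Definition RPW (c : T -> T -> R) (p k : R) (mu nu : probability T R) : R :=
  inf [set eps : R | 0 <= eps <= 1 /\ Wpa c p (1 - eps) mu nu <= k * eps].

End Defs.

From HB Require Import structures.
From mathcomp Require Import all_boot all_order all_algebra.
From mathcomp Require Import all_classical all_reals all_analysis measurable_realfun.
From mathcomp Require Import lra.
Set Implicit Arguments. Unset Printing Implicit Defensive.
Import Order.TTheory GRing.Theory Num.Theory.
Local Open Scope classical_set_scope.
Local Open Scope ring_scope.

(** Since [c <= 1], a plan of mass [a] costs at most [a], and scaling a plan
down scales its cost down, so [eps |-> W_{p,1-eps}] is nonincreasing and
bounded by [W_p]. Pushing the common part of [mu] and [mu~] (built from a Hahn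
decomposition of [mu - mu~]) onto the diagonal gives a partial plan of cost
[0] and mass [1 - eps] with [eps <= delta]; hence [RPW <= delta], and
[RPW <= W_p / k] because [W_{p,1-W_p/k} <= W_p]. Conversely, a feasible
[eps < delta / 10] satisfies [W_p / 2 <= W_{p,1-delta/10} <= W_{p,1-eps} <= k eps],
so every feasible [eps] is at least [min(delta, W_p / k) / 10]. *)

Section plan_cost.
Local Open Scope ereal_scope.
Context (R : realType) (d : measure_display) (T : measurableType d).
Variables (c : T -> T -> R) (p : R).

Let cost_ge0 (z : (T * T)%type) : 0 <= ((c z.1 z.2) `^ p)%:E.
Proof. by rewrite lee_fin powR_ge0. Qed.

Lemma plan_cost_ge0 pi : 0 <= plan_cost c p pi.
Proof. by apply: integral_ge0 => z _. Qed.

Hypothesis hc : unit_diam_metric c.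
Hypothesis mc : measurable_fun setT (fun z : (T * T)%type => c z.1 z.2).

Lemma measurable_cost :
  measurable_fun setT (fun z : (T * T)%type => ((c z.1 z.2) `^ p)%:E).
Proof.
apply/measurable_EFinP.
exact: measurableT_comp (measurable_powR p) mc.
Qed.

Lemma plan_cost_mscale (r : {nonneg R}) pi :
  plan_cost c p (mscale r pi) = r%:num%:E * plan_cost c p pi.
Proof. by rewrite /plan_cost ge0_integral_mscale //; exact: measurable_cost. Qed.

Hypothesis p0 : (0 <= p)%R.

Lemma plan_cost_le_mass pi : plan_cost c p pi <= pi setT.
Proof.
have [c0 _ _ _ c1] := hc.
have cost_le1 z : ((c z.1 z.2) `^ p)%:E <= cst 1 z.
  rewrite lee_fin; apply: (@le_trans _ _ (1 `^ p)%R); last by rewrite powR1.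
  by apply: ge0_ler_powR; rewrite ?nnegrE.
apply: le_trans (ge0_le_integral _ _ _ _ _ (fun z _ => cost_le1 z)) _ => //.
- exact: measurable_cost.
- by rewrite integral_cst // mul1e.
Qed.

End plan_cost.

Section partial_plans.
Local Open Scope ereal_scope.
Context (R : realType) (d : measure_display) (T : measurableType d).
Variables (mu nu : probability T R).

Lemma partial_plan_mscale (r : {nonneg R}) (b : R) pi : (r%:num <= 1)%R ->
  is_partial_plan mu nu b pi -> is_partial_plan mu nu (r%:num * b) (mscale r pi).
Proof.
move=> r1 [pi_mu pi_nu pi_mass]; have r1E : r%:num%:E <= 1 by rewrite lee_fin.
split => [A mA|B mB|].
- by rewrite /mscale; apply: le_trans (pi_mu A mA); apply: gee_pMl.
- by rewrite /mscale; apply: le_trans (pi_nu B mB); apply: gee_pMl.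
- by rewrite -[LHS]/(r%:num%:E * pi setT) pi_mass -EFinM.
Qed.

Lemma coupling_partial_plan pi : is_coupling mu nu pi -> is_partial_plan mu nu 1 pi.
Proof.
move=> [pi_mu pi_nu]; split => [A mA|B mB|]; first by rewrite pi_mu.
  by rewrite pi_nu.
by rewrite -setXTT pi_mu // probability_setT.
Qed.

Lemma product_coupling : is_coupling mu nu (mu \x nu).
Proof.
split => [A mA|B mB].
- apply: eq_trans (product_measure1E mu nu mA measurableT) _.
  by rewrite -[RHS]mule1; congr (_ * _); exact: probability_setT.
- apply: eq_trans (product_measure1E mu nu measurableT mB) _.
  by rewrite -[RHS]mul1e; congr (_ * _); exact: probability_setT.
Qed.

End partial_plans.

Section optimal_cost.
Local Open Scope ereal_scope.
Context (R : realType) (d : measure_display) (T : measurableType d).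
Variables (c : T -> T -> R) (p : R) (mu nu : probability T R).

Definition partial_cost (a : R) : \bar R :=
  ereal_inf [set plan_cost c p pi | pi in is_partial_plan mu nu a].

Definition coupling_cost : \bar R :=
  ereal_inf [set plan_cost c p pi | pi in is_coupling mu nu].

Lemma WpaE a : Wpa c p a mu nu = (fine (partial_cost a) `^ p^-1)%R.
Proof. by []. Qed.

Lemma WpE : Wp c p mu nu = (fine coupling_cost `^ p^-1)%R.
Proof. by []. Qed.

Lemma partial_cost_ge0 a : 0 <= partial_cost a.
Proof. by apply/ereal_infP => _ [pi _ <-]; exact: plan_cost_ge0. Qed.

Lemma coupling_cost_ge0 : 0 <= coupling_cost.
Proof. by apply/ereal_infP => _ [pi _ <-]; exact: plan_cost_ge0. Qed.

Hypothesis mc : measurable_fun setT (fun z : (T * T)%type => c z.1 z.2).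

Lemma partial_cost_le_plan (a b : R) pi : (0 <= a <= b)%R -> (0 < b)%R ->
  is_partial_plan mu nu b pi -> partial_cost a <= plan_cost c p pi.
Proof.
move=> /andP[a0 ab] b0 pi_b.
have ab0 : (0 <= a / b)%R by rewrite divr_ge0 // ltW.
have ab1 : (a / b <= 1)%R by rewrite ler_pdivrMr // mul1r.
have := partial_plan_mscale (NngNum ab0) ab1 pi_b.
rewrite /= divfK ?gt_eqF // => pi_a.
apply: le_trans (ereal_inf_lbound _) _; first by exists (mscale (NngNum ab0) pi).
by rewrite plan_cost_mscale //; apply: gee_pMl; rewrite ?lee_fin ?plan_cost_ge0.
Qed.

Lemma partial_cost_le (a b : R) :
  (0 <= a <= b)%R -> partial_cost a <= partial_cost b.
Proof.
move=> ab; have [b0|b0] := ltP 0%R b.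
  apply/ereal_infP => _ [pi pi_b <-].
  exact: partial_cost_le_plan _ _ _ ab b0 pi_b.
have [a0 {}ab] := andP ab.
by rewrite (@le_anti _ _ a b) // ab (le_trans b0).
Qed.

Lemma partial_cost_le_coupling (a : R) :
  (0 <= a <= 1)%R -> partial_cost a <= coupling_cost.
Proof.
move=> a01; apply/ereal_infP => _ [pi pi_c <-].
exact: partial_cost_le_plan _ _ _ a01 ltr01 (coupling_partial_plan pi_c).
Qed.

Hypothesis hc : unit_diam_metric c.
Hypothesis p0 : (0 <= p)%R.

Lemma coupling_cost_le1 : coupling_cost <= 1.
Proof.
have [_ _ <-] := coupling_partial_plan (product_coupling mu nu).
apply: le_trans _ (plan_cost_le_mass p hc mc p0 (mu \x nu)%E).
by apply: ereal_inf_lbound; exists (mu \x nu)%E; first exact: product_coupling.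
Qed.

Lemma coupling_cost_fin : coupling_cost \is a fin_num.
Proof.
by rewrite ge0_fin_numE ?coupling_cost_ge0 // (le_lt_trans coupling_cost_le1) ?ltry.
Qed.

Lemma partial_cost_fin (a : R) : (0 <= a <= 1)%R -> partial_cost a \is a fin_num.
Proof.
move=> a01; rewrite ge0_fin_numE ?partial_cost_ge0 //.
apply: le_lt_trans (partial_cost_le_coupling _ a01) _.
by rewrite -ge0_fin_numE ?coupling_cost_fin ?coupling_cost_ge0.
Qed.

Lemma Wpa_le (a b : R) : (0 <= a)%R -> (a <= b <= 1)%R ->
  (Wpa c p a mu nu <= Wpa c p b mu nu)%R.
Proof.
move=> a0 /andP[ab b1]; have b0 := le_trans a0 ab.
rewrite !WpaE ge0_ler_powR ?invr_ge0 ?nnegrE ?fine_ge0 ?partial_cost_ge0 //.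
by rewrite fine_le ?partial_cost_fin ?partial_cost_le ?a0 ?b0 ?(le_trans ab b1).
Qed.

Lemma Wpa_le_Wp (a : R) :
  (0 <= a <= 1)%R -> (Wpa c p a mu nu <= Wp c p mu nu)%R.
Proof.
move=> a01; rewrite WpaE WpE.
rewrite ge0_ler_powR ?invr_ge0 ?nnegrE ?fine_ge0 ?partial_cost_ge0 ?coupling_cost_ge0 //.
by rewrite fine_le ?partial_cost_fin ?coupling_cost_fin ?partial_cost_le_coupling.
Qed.

End optimal_cost.

Section total_variation.
Context (R : realType) (d : measure_display) (T : measurableType d).
Variables (mu nu : probability T R).

Let prob_fine01 (P : probability T R) A : measurable A -> 0 <= fine (P A) <= 1.
Proof.
move=> mA; rewrite -!lee_fin fineK ?fin_num_measure // measure_ge0 /=.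
exact: probability_le1.
Qed.

Let dist_le1 A : measurable A -> `|fine (mu A) - fine (nu A)| <= 1.
Proof.
move=> mA; have /andP[? ?] := prob_fine01 mu _ mA.
have /andP[? ?] := prob_fine01 nu _ mA.
by rewrite ler_norml; apply/andP; split; lra.
Qed.

Lemma tv_dist_le1 : tv_dist mu nu <= 1.
Proof.
apply: ge_sup; first by exists `|fine (mu set0) - fine (nu set0)|, set0.
by move=> _ [A mA <-]; exact: dist_le1.
Qed.

Lemma le_tv_dist A : measurable A -> `|fine (mu A) - fine (nu A)| <= tv_dist mu nu.
Proof.
move=> mA; apply: ub_le_sup; last by exists A.
by exists 1 => _ [B mB <-]; exact: dist_le1.
Qed.

End total_variation.

Section common_part.
Local Open Scope ereal_scope.
Context (R : realType) (d : measure_display) (T : measurableType d).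
Variables (mu nu : probability T R).

Let fineE (Q : probability T R) A : measurable A -> Q A = (fine (Q A))%:E.
Proof. by move=> mA; rewrite fineK ?fin_num_measure. Qed.

Lemma common_submeasure : exists2 eps : R, (0 <= eps <= tv_dist mu nu)%R &
  exists m : {measure set T -> \bar R}, [/\ forall A, measurable A -> m A <= mu A,
    forall A, measurable A -> m A <= nu A & m setT = (1 - eps)%:E].
Proof.
pose sigma := cadd (charge_of_finite_measure mu)
  (cscale (-1) (charge_of_finite_measure nu)).
have [P [N [[mP sigmaP] [mN sigmaN] PUN PIN]]] := Hahn_decomposition sigma.
have sigmaE A : sigma A = mu A - nu A.
  by rewrite /sigma /cadd /=; congr (_ + _); exact: mulN1e.
have splitPN (Q : probability T R) A :
    measurable A -> Q A = Q (A `&` P) + Q (A `&` N).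
  move=> mA; rewrite -measureU.
  - by rewrite -setIUr PUN setIT.
  - exact: measurableI.
  - exact: measurableI.
  - by rewrite setIACA PIN setI0.
have nu_le_mu A : measurable A -> nu (A `&` P) <= mu (A `&` P).
  move=> mA; have mAP := measurableI _ _ mA mP.
  have : 0 <= mu (A `&` P) - nu (A `&` P) by rewrite -sigmaE; exact: sigmaP.
  by rewrite sube_ge0 // fin_num_measure.
have mu_le_nu A : measurable A -> mu (A `&` N) <= nu (A `&` N).
  move=> mA; have mAN := measurableI _ _ mA mN.
  have : mu (A `&` N) - nu (A `&` N) <= 0 by rewrite -sigmaE; exact: sigmaN.
  by rewrite sube_le0.
(* [m] is the common part [min(mu, nu)]: [nu] on the positive set [P] of
   [mu - nu] and [mu] on its negative set [N]. *)
pose m : {measure set T -> \bar R} :=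
  measure_add (mrestr nu mP) (mrestr mu mN).
have mE A : m A = nu (A `&` P) + mu (A `&` N) by exact: measure_addE.
have nuP_le_muP : (fine (nu P) <= fine (mu P))%R.
  rewrite fine_le ?fin_num_measure //.
  by have := nu_le_mu _ measurableT; rewrite !setTI.
exists (fine (mu P) - fine (nu P))%R.
  by rewrite subr_ge0 nuP_le_muP (le_trans (ler_norm _) (le_tv_dist _ _ _ mP)).
exists m; split => [A mA|A mA|].
- by rewrite mE (splitPN mu A mA) leeD // nu_le_mu.
- by rewrite mE (splitPN nu A mA) leeD // mu_le_nu.
- have := splitPN mu _ measurableT; rewrite probability_setT mE !setTI.
  rewrite (fineE mu _ mP) (fineE mu _ mN) (fineE nu _ mP) -!EFinD => -[muT].
  congr EFin; lra.
Qed.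

End common_part.

Section diagonal_plan.
Local Open Scope ereal_scope.
Context (R : realType) (d : measure_display) (T : measurableType d).

Let diag (x : T) := (x, x).

Definition diag_measure (m : {measure set T -> \bar R}) :
  {measure set (T * T)%type -> \bar R}.
Proof. refine (pushforward m diag); exact: measurable_fun_pair. Defined.

Lemma diag_partial_plan (mu nu : probability T R)
    (m : {measure set T -> \bar R}) (a : R) :
    (forall A, measurable A -> m A <= mu A) ->
    (forall A, measurable A -> m A <= nu A) -> m setT = a%:E ->
  is_partial_plan mu nu a (diag_measure m).
Proof.
move=> m_mu m_nu mT; split => [A mA|B mB|] /=; rewrite /pushforward.
- suff -> : diag @^-1` (A `*` setT) = A by exact: m_mu.
  by apply/seteqP; split => x /=; [case|].
- suff -> : diag @^-1` (setT `*` B) = B by exact: m_nu.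
  by apply/seteqP; split => x /=; [case|].
- by rewrite preimage_setT.
Qed.

Lemma plan_cost_diag (c : T -> T -> R) (p : R) (m : {measure set T -> \bar R}) :
    (0 < p)%R -> (forall x, c x x = 0%R) ->
    measurable_fun setT (fun z : (T * T)%type => c z.1 z.2) ->
  plan_cost c p (diag_measure m) = 0.
Proof.
move=> p0 c0 mc; rewrite /plan_cost /= ge0_integral_pushforward //.
- by apply: integral0_eq => x _ /=; rewrite c0 powR0 // gt_eqF.
- exact: measurable_fun_pair.
- exact: measurable_cost.
- by move=> z _; rewrite lee_fin powR_ge0.
Qed.

End diagonal_plan.

Section robust_partial_wasserstein.
Context (R : realType) (d : measure_display) (T : measurableType d).
Variables (c : T -> T -> R) (p k : R) (mu nu : probability T R).

Definition rpw_feasible : set R :=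
  [set eps | 0 <= eps <= 1 /\ Wpa c p (1 - eps) mu nu <= k * eps].

Lemma RPWE : RPW c p k mu nu = inf rpw_feasible.
Proof. by []. Qed.

Hypothesis hc : unit_diam_metric c.
Hypothesis mc : measurable_fun setT (fun z : (T * T)%type => c z.1 z.2).
Hypothesis p0 : 0 < p.
Hypothesis k0 : 0 < k.

Local Notation W := (Wp c p mu nu).

Lemma exists_Wpa_eq0 :
  exists2 eps, 0 <= eps <= tv_dist mu nu & Wpa c p (1 - eps) mu nu = 0.
Proof.
have [eps eps_tv [m [m_mu m_nu mT]]] := common_submeasure mu nu.
exists eps => //; rewrite WpaE.
suff -> : partial_cost c p mu nu (1 - eps) = 0%E by rewrite powR0 // invr_eq0 gt_eqF.
apply/eqP; rewrite eq_le partial_cost_ge0 andbT.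
have c_diag x : c x x = 0 by have [_ c0 _ _ _] := hc; apply/c0.
rewrite -(plan_cost_diag c p m p0 c_diag mc); apply: ereal_inf_lbound.
by exists (diag_measure m) => //; exact: diag_partial_plan.
Qed.

Lemma RPW_le eps : rpw_feasible eps -> RPW c p k mu nu <= eps.
Proof. by move=> feas; rewrite RPWE; apply: ge_inf => //; exists 0 => x [/andP[]]. Qed.

Lemma exists_feasible_le_tv : exists2 eps, rpw_feasible eps & eps <= tv_dist mu nu.
Proof.
have [eps /andP[eps0 eps_tv] W0] := exists_Wpa_eq0; exists eps => //; split.
  by rewrite eps0 (le_trans eps_tv (tv_dist_le1 _ _)).
by rewrite W0 mulr_ge0 // ltW.
Qed.

Lemma le_RPW r : (forall eps, rpw_feasible eps -> r <= eps) -> r <= RPW c p k mu nu.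
Proof.
move=> lb_r; rewrite RPWE; apply: lb_le_inf => //.
by have [eps feas _] := exists_feasible_le_tv; exists eps.
Qed.

Lemma RPW_le_tv : RPW c p k mu nu <= tv_dist mu nu.
Proof.
have [eps feas eps_tv] := exists_feasible_le_tv.
exact: le_trans (RPW_le feas) eps_tv.
Qed.

Lemma RPW_le_Wp : RPW c p k mu nu <= W / k.
Proof.
have [Wk1|Wk1] := leP (W / k) 1; last first.
  exact: le_trans RPW_le_tv (le_trans (tv_dist_le1 _ _) (ltW Wk1)).
have Wk0 : 0 <= W / k by rewrite divr_ge0 ?powR_ge0 // ltW.
apply: RPW_le; split; first by rewrite Wk0.
rewrite [k * _]mulrC divfK ?gt_eqF //; apply: (Wpa_le_Wp _ _ _ mc hc (ltW p0)).
by rewrite subr_ge0 Wk1 lerBlDr lerDl.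
Qed.

Lemma RPW_le_min : RPW c p k mu nu <= Num.min (tv_dist mu nu) (W / k).
Proof. by rewrite le_min RPW_le_tv RPW_le_Wp. Qed.

Lemma min_le_RPW delta : 0 <= delta <= 10 ->
    W / 2 <= Wpa c p (1 - delta / 10) mu nu ->
  Num.min delta (W / k) <= 10 * RPW c p k mu nu.
Proof.
move=> /andP[delta0 delta10] W_half; rewrite -ler_pdivrMl //.
apply: le_RPW => eps [/andP[eps0 eps1] feas].
have min_delta : Num.min delta (W / k) <= delta by rewrite ge_min lexx.
have [delta_eps|eps_delta] := leP (delta / 10) eps; first lra.
have W_keps : W / 2 <= k * eps.
  apply: le_trans W_half (le_trans _ feas).
  apply: (Wpa_le _ _ _ mc hc (ltW p0)); lra.
have W_eps : W / k <= 2 * eps by rewrite ler_pdivrMr //; nra.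
have min_Wk : Num.min delta (W / k) <= W / k by rewrite ge_min lexx orbT.
lra.
Qed.

End robust_partial_wasserstein.

Theorem lemma3p2 :
  exists C : nat, (0 < C)%N /\
  forall (R : realType) (d : measure_display) (T : measurableType d)
    (c : T -> T -> R) (mu mut : probability T R) (delta p k : R),
    unit_diam_metric c ->
    measurable_fun setT (fun z : (T * T)%type => c z.1 z.2) ->
    0 < delta ->
    tv_dist mu mut = delta ->
    Wpa c p (1 - delta / 10) mu mut >= Wp c p mu mut / 2 ->
    1 <= p -> 0 < k ->
    Num.min delta (Wp c p mu mut / k) <= C%:R * RPW c p k mu mut /\
    RPW c p k mu mut <= C%:R * Num.min delta (Wp c p mu mut / k).
Proof.
exists 10%N; split => // R d T c mu mut delta p k hc mc delta0 tvE W_half p1 k0.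
have p0 : 0 < p := lt_le_trans ltr01 p1.
have delta1 : delta <= 1 by rewrite -tvE tv_dist_le1.
have delta010 : 0 <= delta <= 10 by apply/andP; split; lra.
split; first exact: (min_le_RPW p k mu mut hc mc p0 k0).
have min0 : 0 <= Num.min delta (Wp c p mu mut / k).
  by rewrite le_min (ltW delta0) divr_ge0 ?powR_ge0 // ltW.
have := RPW_le_min p k mu mut hc mc p0 k0; rewrite tvE; lra.
Qed.
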